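(* For integers $n,m\ge 3$ and positive integers $q_1,\dots,q_n,r_1,\dots,r_n,s_1,\dots,s_m,p_1,\dots,p_m$, $${\rm dim}_s\big(K_{n,n}^{-M}(q_1,\dots,q_n,r_1,\dots,r_n)\diamond K_{m,m}^{-M}(s_1,\dots,s_m,p_1,\dots,p_m)\big)=\sum_{i=1}^{n}\Big((q_i+r_i)\sum_{j=1}^{m}(s_j+p_j)\Big)-nm.$$
   Context: The modular product $G\diamond H$ has vertex set $V(G)\times V(H)$; distinct vertices $(g,h)$ and $(g',h')$ are adjacent iff ($g=g'$ and $hh'\in E(H)$), or ($gg'\in E(G)$ and $h=h'$), or ($gg'\in E(G)$ and $hh'\in E(H)$), or ($g\neq g'$, $h\neq h'$, $gg'\notin E(G)$ and $hh'\notin E(H)$). $K_{n,n}^{-M}(q_1,\dots,q_n,r_1,\dots,r_n)$ is the graph whose vertex set is a disjoint union of sets $X_1,\dots,X_n,Y_1,\dots,Y_n$ with $|X_i|=q_i$, $|Y_i|=r_i$, where each $X_i$ and each $Y_i$ induces a clique, every vertex of $X_i$ is adjacent to every vertex of $Y_j$ whenever $i\neq j$, and there are no other edges. ${\rm dim}_s(X)$ is the strong metric dimension: the minimum size of $S\subseteq V(X)$ such that for all distinct $x,y$ some $z\in S$ has $d_X(y,z)=d_X(y,x)+d_X(x,z)$ or $d_X(x,z)=d_X(x,y)+d_X(y,z)$. *)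

From mathcomp Require Import all_boot.
Set Implicit Arguments. Unset Strict Implicit. Unset Printing Implicit Defensive.

Section Graphs.
Variable T : finType.
Variable e : rel T.

Fixpoint nball (x : T) (k : nat) : {set T} :=
  match k with
  | 0 => [set x]
  | k'.+1 => nball x k' :|: [set z | [exists w in nball x k', e w z]]
  end.

(* graph distance: least k with y within k steps of x
   (returns #|T| if y is unreachable; irrelevant for connected graphs) *)
Definition dist (x y : T) : nat := find (fun k => y \in nball x k) (iota 0 #|T|).

Definition strong_resolving (S : {set T}) : bool :=
  [forall x, forall y, (x != y) ==>
     [exists z in S, (dist y z == dist y x + dist x z)
                  || (dist x z == dist x y + dist y z)]].

Lemma strong_resolving_exists :
  exists k, [exists S : {set T}, strong_resolving S && (#|S| == k)].
Proof.
exists #|[set: T]|; apply/existsP; exists [set: T]; rewrite eqxx andbT.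
apply/forallP => x; apply/forallP => y; apply/implyP => _.
apply/existsP; exists x; rewrite in_setT /=.
have -> : dist x x = 0.
  rewrite /dist; have : 0 < #|T| by apply/card_gt0P; exists x.
  by case: #|T| => // k _ /=; rewrite inE eqxx.
by rewrite addn0 eqxx.
Qed.

Definition sdim : nat := ex_minn strong_resolving_exists.

End Graphs.

Definition modprod (T1 T2 : finType) (e1 : rel T1) (e2 : rel T2) : rel (T1 * T2) :=
  fun u v =>
    (u != v) &&
    [|| (u.1 == v.1) && e2 u.2 v.2,
        e1 u.1 v.1 && (u.2 == v.2),
        e1 u.1 v.1 && e2 u.2 v.2
      | [&& u.1 != v.1, u.2 != v.2, ~~ e1 u.1 v.1 & ~~ e2 u.2 v.2]].

(* vertex set of K_{n,n}^{-M}(q_1..q_n, r_1..r_n):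
   inl (i, k) is the k-th vertex of X_i, inr (i, k) the k-th vertex of Y_i *)
Definition KMvert (n : nat) (q r : 'I_n -> nat) : finType :=
  ({i : 'I_n & 'I_(q i)} + {i : 'I_n & 'I_(r i)})%type.

Definition KMadj (n : nat) (q r : 'I_n -> nat) : rel (KMvert q r) :=
  fun x y =>
    match x, y with
    | inl a, inl b => (tag a == tag b) && (a != b)
    | inr a, inr b => (tag a == tag b) && (a != b)
    | inl a, inr b => tag a != tag b
    | inr a, inl b => tag a != tag b
    end.
Arguments KMadj {n} q r.

From mathcomp Require Import all_boot zify.
Set Implicit Arguments. Unset Strict Implicit. Unset Printing Implicit Defensive.

(* In [K_{n,n}^{-M}] two vertices are equal or adjacent iff "same side" and
   "same index" have the same truth value, so every distance in the modular
   product is determined by these two bits in each factor: it is at most 3, and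
   equals 3 only for distinct vertices with equal indices in both factors whose
   sides differ in exactly one factor.  Two distinct vertices with the same pair
   of indices are mutually maximally distant, so a strong resolving set misses
   at most one vertex per index pair, giving [sdim >= |V| - nm].  Conversely,
   removing from [V] one vertex per index pair, taken from [X_i] x [X_j], leaves
   a strong resolving set. *)

Section Distance.
Variables (T : finType) (e : rel T).

Lemma in_nball0 x y : (y \in nball e x 0) = (y == x).
Proof. by rewrite inE. Qed.

Lemma in_nballS x k y :
  (y \in nball e x k.+1) = (y \in nball e x k) || [exists w, (w \in nball e x k) && e w y].
Proof. by rewrite /= !inE. Qed.

Lemma in_nball1 x y : (y \in nball e x 1) = (y == x) || e x y.
Proof.
rewrite in_nballS in_nball0; congr (_ || _).
apply/existsP/idP => [[w /andP []]|exy]; first by rewrite in_nball0 => /eqP ->.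
by exists x; rewrite in_nball0 eqxx.
Qed.

Lemma subset_nball x j k : j <= k -> nball e x j \subset nball e x k.
Proof.
elim: k => [|k IHk]; first by rewrite leqn0 => /eqP ->.
rewrite leq_eqVlt => /orP [/eqP -> //|/IHk sub].
exact: subset_trans sub (subsetUl _ _).
Qed.

Lemma dist_least x y k : k < #|T| -> y \in nball e x k ->
  (forall j, j < k -> y \notin nball e x j) -> dist e x y = k.
Proof.
move=> ltkT yk ynj; rewrite /dist; set P := fun j => y \in nball e x j.
have hasP : has P (iota 0 #|T|) by apply/hasP; exists k; rewrite ?mem_iota.
case: (ltngtP (find P (iota 0 #|T|)) k) => // [ltk|gtk].
- have := nth_find 0 hasP; rewrite nth_iota ?add0n; last exact: ltn_trans ltkT.
  by rewrite /P (negbTE (ynj _ ltk)).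
- by have := before_find 0 gtk; rewrite nth_iota ?add0n // /P yk.
Qed.

Lemma distxx x : dist e x x = 0.
Proof. by apply: dist_least; rewrite ?in_nball0 //; apply/card_gt0P; exists x. Qed.

Lemma dist_adj x y : x != y -> e x y -> dist e x y = 1.
Proof.
move=> neq exy; apply: dist_least; last by case=> // _; rewrite in_nball0 eq_sym.
  by apply/card_gt1P; exists x, y.
by rewrite in_nball1 exy orbT.
Qed.

Lemma notin_nball1 x y : x != y -> ~~ e x y -> y \notin nball e x 1.
Proof. by move=> neq nexy; rewrite in_nball1 negb_or eq_sym neq. Qed.

Lemma dist_two x y w : 2 < #|T| -> x != y -> ~~ e x y -> e x w -> e w y ->
  dist e x y = 2.
Proof.
move=> ltT neq nexy exw ewy; apply: dist_least => //.
  rewrite in_nballS; apply/orP; right; apply/existsP; exists w.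
  by rewrite in_nball1 exw orbT.
move=> j ltj; apply: contra (notin_nball1 neq nexy); apply/subsetP/subset_nball.
by rewrite -ltnS.
Qed.

Lemma dist_three x y w1 w2 : 3 < #|T| -> x != y -> ~~ e x y ->
  (forall w, e x w -> ~~ e w y) -> e x w1 -> e w1 w2 -> e w2 y -> dist e x y = 3.
Proof.
move=> ltT neq nexy nocommon e1 e2 e3; apply: dist_least => //.
  rewrite in_nballS; apply/orP; right; apply/existsP; exists w2.
  rewrite e3 andbT in_nballS; apply/orP; right; apply/existsP; exists w1.
  by rewrite e2 in_nball1 e1 orbT.
have ny2 : y \notin nball e x 2.
  rewrite in_nballS negb_or notin_nball1 //=; apply/existsP => -[w /andP []].
  rewrite in_nball1 => /orP [/eqP ->|/nocommon/negbTE -> //].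
  by rewrite (negbTE nexy).
by move=> j ltj; apply: contra ny2; apply/subsetP/subset_nball; rewrite -ltnS.
Qed.

Definition maximally_distant (x y : T) : Prop :=
  forall z, z != y -> dist e x z != dist e x y + dist e y z.

Lemma strong_resolving_mmd (S : {set T}) x y : strong_resolving e S -> x != y ->
  maximally_distant y x -> maximally_distant x y -> (x \in S) || (y \in S).
Proof.
move=> /forallP /(_ x) /forallP /(_ y) /implyP res neq mdx mdy.
have /existsP [z /andP [zS geo]] := res neq.
case: (eqVneq z x) => [<-|nzx]; first by rewrite zS.
case: (eqVneq z y) => [<-|nzy]; first by rewrite zS orbT.
by move: geo; rewrite (negbTE (mdx _ nzx)) (negbTE (mdy _ nzy)).
Qed.

(* Two vertices of one fibre cannot both lie outside [S], so [f] is injective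
   on [~: S]. *)
Lemma card_strong_resolving (K : finType) (f : T -> K) (S : {set T}) :
  (forall x y, x != y -> f x = f y -> maximally_distant x y) ->
  strong_resolving e S -> #|T| - #|K| <= #|S|.
Proof.
move=> fibre_mmd res.
have inj : {in ~: S &, injective f}.
  move=> x y; rewrite !inE => xS yS fxy; apply/eqP/negPn/negP => neq.
  have mdyx : maximally_distant y x by apply: fibre_mmd; rewrite // eq_sym.
  have := strong_resolving_mmd res neq mdyx (fibre_mmd x y neq fxy).
  by rewrite (negbTE xS) (negbTE yS).
have := max_card (f @: ~: S); rewrite card_in_imset // cardsCs setCK.
have := subset_leq_card (subsetT S); rewrite cardsT; lia.
Qed.

Lemma strong_resolving_setC (U : {set T}) :
  (forall x y, x \in U -> y \in U -> x != y -> exists2 z, z \notin U &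
     (dist e y z == dist e y x + dist e x z) || (dist e x z == dist e x y + dist e y z)) ->
  strong_resolving e (~: U).
Proof.
move=> resU; apply/forallP => x; apply/forallP => y; apply/implyP => neq.
case: (boolP (x \in U)) => xU; last first.
  by apply/existsP; exists x; rewrite inE xU distxx addn0 eqxx.
case: (boolP (y \in U)) => yU; last first.
  by apply/existsP; exists y; rewrite inE yU distxx addn0 eqxx orbT.
by have [z zU geo] := resU x y xU yU neq; apply/existsP; exists z; rewrite inE zU.
Qed.

Lemma sdim_le (S : {set T}) : strong_resolving e S -> sdim e <= #|S|.
Proof.
move=> res; rewrite /sdim; case: ex_minnP => k _; apply.
by apply/existsP; exists S; rewrite res eqxx.
Qed.

Lemma sdim_witness : exists2 S : {set T}, strong_resolving e S & #|S| = sdim e.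
Proof.
by rewrite /sdim; case: ex_minnP => k /existsP [S /andP [res /eqP <-]] _; exists S.
Qed.

End Distance.

Lemma modprodE (T1 T2 : finType) (e1 : rel T1) (e2 : rel T2) u v :
  modprod e1 e2 u v = (u != v) &&
    (((u.1 == v.1) || e1 u.1 v.1) == ((u.2 == v.2) || e2 u.2 v.2)).
Proof.
case: u v => a b [a' b']; rewrite /modprod /= xpair_eqE.
by case: (eqVneq a a') => [->|]; case: (eqVneq b b') => [->|] //=;
  case: (e1 _ _); case: (e2 _ _).
Qed.

Lemma ord_avoid2 N (a b : 'I_N) : 2 < N -> exists k : 'I_N, (k != a) && (k != b).
Proof.
move=> ltN; have : 0 < #|~: [set a; b]|.
  by have := cardsC [set a; b]; rewrite card_ord cards2; case: (a != b) => /=; lia.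
by case/card_gt0P => k; rewrite !inE negb_or; exists k.
Qed.

Section KMGraph.
Variables (n : nat) (q r : 'I_n -> nat).

Definition KMside (x : KMvert q r) : bool := if x is inl _ then true else false.

Definition KMindex (x : KMvert q r) : 'I_n :=
  match x with inl a => tag a | inr a => tag a end.

Definition same_side (x y : KMvert q r) := KMside x == KMside y.
Definition same_index (x y : KMvert q r) := KMindex x == KMindex y.

Lemma eq_or_KMadj x y : (x == y) || KMadj q r x y = (same_side x y == same_index x y).
Proof.
rewrite /same_side /same_index.
case: x y => [a|a] [b|b] //=; try by case: eqP.
all: case: (eqVneq a b) => [-> | neq]; rewrite ?eqxx //= ?andbT.
all: by case: eqP => // -[eqab]; rewrite eqab eqxx in neq.
Qed.

Lemma neq_KMindex x y : KMindex x != KMindex y -> x != y.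
Proof. by apply: contra => /eqP ->. Qed.

Lemma card_KMvert : #|KMvert q r| = \sum_(i < n) (q i + r i).
Proof.
rewrite card_sum !card_tagged !sumnE !big_map -!big_enum /= -big_split /=.
by apply: eq_bigr => i _; rewrite !card_ord.
Qed.

Hypotheses (q_gt0 : forall i, 0 < q i) (r_gt0 : forall i, 0 < r i).

Definition KMvertex (b : bool) (i : 'I_n) : KMvert q r :=
  if b then inl (Tagged _ (Ordinal (q_gt0 i))) else inr (Tagged _ (Ordinal (r_gt0 i))).

Lemma KMside_vertex b i : KMside (KMvertex b i) = b.
Proof. by case: b. Qed.

Lemma KMindex_vertex b : cancel (KMvertex b) KMindex.
Proof. by case: b. Qed.

Lemma eq_KMvertex b b' i i' :
  (KMvertex b i == KMvertex b' i') = (b == b') && (i == i').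
Proof.
apply/eqP/andP => [eqv|[/eqP -> /eqP -> //]]; split; apply/eqP.
  by have := congr1 KMside eqv; rewrite !KMside_vertex.
by have := congr1 KMindex eqv; rewrite !KMindex_vertex.
Qed.

Lemma card_KMvert_ge : n <= #|KMvert q r|.
Proof.
by have := @leq_card _ _ (KMvertex true) (can_inj (KMindex_vertex true)); rewrite card_ord.
Qed.

End KMGraph.

Arguments KMvertex : simpl never.

(* A pair [u != v] of the product is described by [a_k] (same side) and [b_k]
   (same index) in each factor [k].  It is an edge iff the factors agree on
   being equal-or-adjacent, i.e. iff [(a_1 == b_1) == (a_2 == b_2)]. *)
Definition mp_dist (a1 b1 a2 b2 : bool) : nat :=
  if (a1 == b1) == (a2 == b2) then 1 else if [&& b1, b2 & a1 != a2] then 3 else 2.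

Section KMProduct.
Variables (n m : nat) (q r : 'I_n -> nat) (s p : 'I_m -> nat).
Hypotheses (q_gt0 : forall i, 0 < q i) (r_gt0 : forall i, 0 < r i).
Hypotheses (s_gt0 : forall j, 0 < s j) (p_gt0 : forall j, 0 < p j).

Local Notation V := (KMvert q r * KMvert s p)%type.
Local Notation P := (modprod (KMadj q r) (KMadj s p)).
Local Notation vert1 := (KMvertex q_gt0 r_gt0).
Local Notation vert2 := (KMvertex s_gt0 p_gt0).

Lemma modprod_KMadjE (u v : V) : P u v = (u != v) &&
  ((same_side u.1 v.1 == same_index u.1 v.1) == (same_side u.2 v.2 == same_index u.2 v.2)).
Proof. by rewrite modprodE !eq_or_KMadj. Qed.

Definition KMprod_dist (u v : V) : nat :=
  if u == v then 0
  else mp_dist (same_side u.1 v.1) (same_index u.1 v.1) (same_side u.2 v.2) (same_index u.2 v.2).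

Definition far (u v : V) : bool :=
  [&& same_index u.1 v.1, same_index u.2 v.2 & same_side u.1 v.1 != same_side u.2 v.2].

Lemma far_no_common_neighbour (u v : V) : far u v -> forall w, P u w -> ~~ P w v.
Proof.
case: u v => g h [g' h'] /and3P [/eqP i1 /eqP i2 sides] [w1 w2].
rewrite !modprod_KMadjE /same_side /same_index /= -i1 -i2 in sides *.
rewrite (eq_sym (KMindex w1)) (eq_sym (KMindex w2)).
move=> /andP [_ uw]; apply/negP => /andP [_ wv]; move: uw wv sides.
case: (KMindex g == KMindex w1); case: (KMindex h == KMindex w2);
by case: (KMside g); case: (KMside g'); case: (KMside h); case: (KMside h');
   case: (KMside w1); case: (KMside w2).
Qed.

Hypotheses (n_gt2 : 2 < n) (m_gt2 : 2 < m).

Lemma card_KMprod_gt3 : 3 < #|{: V}|.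
Proof.
rewrite card_prod; have le_n := card_KMvert_ge q_gt0 r_gt0.
have le_m := card_KMvert_ge s_gt0 p_gt0.
by apply: leq_trans (leq_mul le_n le_m); nia.
Qed.

Lemma common_neighbour (u v : V) : u != v -> ~~ P u v -> ~~ far u v ->
  exists w, P u w && P w v.
Proof.
rewrite modprod_KMadjE; case: u v => g h [g' h'] /= neq.
rewrite neq /far /same_side /same_index /= => noadj notfar.
have [k /andP [kg kg']] := ord_avoid2 (KMindex g) (KMindex g') n_gt2.
have [l /andP [lh lh']] := ord_avoid2 (KMindex h) (KMindex h') m_gt2.
have neq1 b : vert1 b k != g /\ vert1 b k != g'.
  by split; apply: neq_KMindex; rewrite KMindex_vertex.
have neq2 b : vert2 b l != h /\ vert2 b l != h'.
  by split; apply: neq_KMindex; rewrite KMindex_vertex.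
case: (boolP ((KMside g == KMside g') == (KMside h == KMside h'))) => sides.
  (* in each factor the new coordinate is neither equal nor adjacent to those of [u], [v] *)
  exists (vert1 (KMside g) k, vert2 (KMside h) l).
  have [[ng ng'] [nh nh']] := (neq1 (KMside g), neq2 (KMside h)).
  rewrite !modprod_KMadjE /same_side /same_index /= !xpair_eqE !KMside_vertex !KMindex_vertex.
  rewrite ![_ == vert1 _ _]eq_sym ![_ == vert2 _ _]eq_sym.
  rewrite (negbTE ng) (negbTE ng') (negbTE nh) (negbTE nh') (eq_sym (KMindex g)).
  rewrite (eq_sym (KMindex h)) (negbTE kg) (negbTE kg') (negbTE lh) (negbTE lh') !eqxx /=.
  by move: sides; case: (KMside g); case: (KMside g'); case: (KMside h); case: (KMside h').
have [ig ih] : (KMindex g == KMindex g') = false /\ (KMindex h == KMindex h') = false.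
  move: noadj notfar sides; case: (KMindex g == KMindex g'); case: (KMindex h == KMindex h');
  by case: (KMside g); case: (KMside g'); case: (KMside h); case: (KMside h').
rewrite ig ih in noadj; move: noadj sides.
case: (boolP (KMside g == KMside g')) => side1 noadj sides.
- exists (vert1 (~~ KMside g) k, h).
  have [ng ng'] := neq1 (~~ KMside g).
  rewrite !modprod_KMadjE /same_side /same_index /= !xpair_eqE !KMside_vertex !KMindex_vertex.
  rewrite ![_ == vert1 _ _]eq_sym (negbTE ng) (negbTE ng').
  rewrite (eq_sym (KMindex g)) (negbTE kg) (negbTE kg') ih !eqxx /=.
  by move: side1 sides; case: (KMside g); case: (KMside g'); case: (KMside h); case: (KMside h').
- exists (g, vert2 (~~ KMside h) l).
  have [nh nh'] := neq2 (~~ KMside h).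
  rewrite !modprod_KMadjE /same_side /same_index /= !xpair_eqE !KMside_vertex !KMindex_vertex.
  rewrite ![_ == vert2 _ _]eq_sym (negbTE nh) (negbTE nh').
  rewrite (eq_sym (KMindex h)) (negbTE lh) (negbTE lh') ig !eqxx /= !andbF /=.
  by move: side1 sides; case: (KMside g); case: (KMside g'); case: (KMside h); case: (KMside h').
Qed.

Lemma dist_KMprod (u v : V) : dist P u v = KMprod_dist u v.
Proof.
have ltV := card_KMprod_gt3; rewrite /KMprod_dist /mp_dist.
case: (eqVneq u v) => [->|neq]; first exact: distxx.
case: ifP => [adj|/negbT noadj].
  by apply: dist_adj; rewrite // modprod_KMadjE neq adj.
have nPuv : ~~ P u v by rewrite modprod_KMadjE neq (negbTE noadj).
case: ifPn => farv; last first.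
  have [w /andP [uw wv]] := common_neighbour neq nPuv farv.
  by apply: dist_two uw wv => //; apply: ltnW.
(* a path of length 3 starts with a neighbour of [u] of opposite sides and fresh indices *)
case: u v neq noadj nPuv farv => g h [g' h'] /= neq noadj nPuv farv.
have [k /andP [kg _]] := ord_avoid2 (KMindex g) (KMindex g) n_gt2.
have [l /andP [lh _]] := ord_avoid2 (KMindex h) (KMindex h) m_gt2.
set w1 := (vert1 (~~ KMside g) k, vert2 (~~ KMside h) l).
move: (farv) => /and3P [/eqP i1 /eqP i2 sides].
rewrite /same_side /same_index /= in sides.
have [w2 /andP [w1w2 w2v]] : exists w, P w1 w && P w (g', h').
  have w1v : w1 != (g', h').
    by rewrite xpair_eqE negb_and neq_KMindex // KMindex_vertex -i1.
  apply: common_neighbour => //.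
    rewrite modprod_KMadjE w1v /same_side /same_index /= !KMside_vertex !KMindex_vertex.
    rewrite -i1 -i2 (negbTE kg) (negbTE lh).
    by move: sides; case: (KMside g); case: (KMside g'); case: (KMside h); case: (KMside h').
  by rewrite /far /same_index /= KMindex_vertex -i1 (negbTE kg).
have nocommon := far_no_common_neighbour (u := (g, h)) (v := (g', h')) farv.
apply: (dist_three ltV neq nPuv nocommon _ w1w2 w2v).
have ng : g != w1.1 by rewrite eq_sym neq_KMindex // KMindex_vertex.
rewrite modprod_KMadjE /= xpair_eqE (negbTE ng) /same_side /same_index /=.
rewrite !KMside_vertex !KMindex_vertex (eq_sym (KMindex g)) (eq_sym (KMindex h)).
by rewrite (negbTE kg) (negbTE lh); case: (KMside g); case: (KMside h).
Qed.

Lemma same_indices_maximally_distant (x y : V) : x != y ->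
  (KMindex x.1, KMindex x.2) = (KMindex y.1, KMindex y.2) -> maximally_distant P x y.
Proof.
case: x y => g h [g' h'] /= neq [i1 i2] [g'' h''] nzy.
rewrite !dist_KMprod /KMprod_dist /= (negbTE neq) [(g', h') == _]eq_sym (negbTE nzy).
case: ifP => [_|_]; first by rewrite eq_sym addn_eq0 /mp_dist; do 2!case: ifP.
rewrite /mp_dist /same_side /same_index /= -i1 -i2.
rewrite (eq_sym (KMindex g)) (eq_sym (KMindex h)) !eqxx.
case: (KMindex g'' == KMindex g); case: (KMindex h'' == KMindex h);
by case: (KMside g); case: (KMside g'); case: (KMside g''); case: (KMside h);
   case: (KMside h'); case: (KMside h'').
Qed.

Lemma strong_resolving_KMprod_ge (S : {set V}) :
  strong_resolving P S -> #|{: V}| - n * m <= #|S|.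
Proof.
move=> res; have := card_strong_resolving (same_indices_maximally_distant) res.
by rewrite [X in _ - X <= _]card_prod !card_ord.
Qed.

Definition first_vertices : {set V} :=
  setX (vert1 true @: [set: 'I_n]) (vert2 true @: [set: 'I_m]).

Lemma card_first_vertices : #|first_vertices| = n * m.
Proof.
rewrite cardsX !card_imset ?cardsT ?card_ord //; exact: can_inj (KMindex_vertex _ _ true).
Qed.

Lemma strong_resolving_KMprod : strong_resolving P (~: first_vertices).
Proof.
apply: strong_resolving_setC => -[x1 x2] [y1 y2].
rewrite !inE /= => /andP [/imsetP [i _ ->] /imsetP [j _ ->]].
move=> /andP [/imsetP [i' _ ->] /imsetP [j' _ ->]].
rewrite xpair_eqE !eq_KMvertex /= => neq.
have notin2 k : (vert2 false k \in vert2 true @: [set: 'I_m]) = false.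
  by apply/negbTE/imsetP => -[k' _ /eqP]; rewrite eq_KMvertex.
have notin1 k : (vert1 false k \in vert1 true @: [set: 'I_n]) = false.
  by apply/negbTE/imsetP => -[k' _ /eqP]; rewrite eq_KMvertex.
move: neq; have [<-|ii'] := eqVneq i i' => /= neq.
  exists (vert1 true i, vert2 false j'); first by rewrite !inE notin2 andbF.
  rewrite !dist_KMprod /KMprod_dist /mp_dist /same_side /same_index /= !xpair_eqE.
  by rewrite !eq_KMvertex ?KMside_vertex ?KMindex_vertex /= !eqxx /= (eq_sym j') (negbTE neq).
have [<-|jj'] := eqVneq j j'.
  exists (vert1 false i', vert2 true j); first by rewrite !inE notin1.
  rewrite !dist_KMprod /KMprod_dist /mp_dist /same_side /same_index /= !xpair_eqE.
  by rewrite !eq_KMvertex ?KMside_vertex ?KMindex_vertex /= !eqxx /= (eq_sym i') (negbTE ii').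
have [k /andP [kj kj']] := ord_avoid2 j j' m_gt2.
exists (vert1 true i, vert2 false k); first by rewrite !inE notin2 andbF.
rewrite !dist_KMprod /KMprod_dist /mp_dist /same_side /same_index /= !xpair_eqE.
rewrite !eq_KMvertex ?KMside_vertex ?KMindex_vertex /= !eqxx /=.
by rewrite !(eq_sym i') [j' == j]eq_sym [j == k]eq_sym [j' == k]eq_sym (negbTE ii')
  (negbTE jj') (negbTE kj) (negbTE kj').
Qed.

Lemma sdim_KMprod : sdim P = #|{: V}| - n * m.
Proof.
apply/eqP; rewrite eqn_leq; apply/andP; split.
  by have := sdim_le strong_resolving_KMprod; rewrite cardsCs setCK card_first_vertices.
by have [S res <-] := sdim_witness P; apply: strong_resolving_KMprod_ge.
Qed.

End KMProduct.

Theorem mainTheorem13 (n m : nat) (hn : 3 <= n) (hm : 3 <= m)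
  (q r : 'I_n -> nat) (s p : 'I_m -> nat)
  (hq : forall i, 0 < q i) (hr : forall i, 0 < r i)
  (hs : forall j, 0 < s j) (hp : forall j, 0 < p j) :
  sdim (modprod (KMadj q r) (KMadj s p)) =
  \sum_(i < n) ((q i + r i) * \sum_(j < m) (s j + p j)) - n * m.
Proof.
by rewrite (sdim_KMprod hq hr hs hp hn hm) card_prod !card_KMvert big_distrl.
Qed.
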